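(* Let $m\ge 2$. The Lucas numbers are complete mod $m$ if and only if $m\in\{2,4,6,7,14\}$ or $m=3^j$ for some integer $j\ge1$.
   Context: The Lucas numbers are the sequence $L_1=1$, $L_2=3$, $L_{n+1}=L_{n-1}+L_n$ (so $1,3,4,7,11,18,\dots$). A sequence is complete mod $m$ if every residue class modulo $m$ contains some term of the sequence, and defective mod $m$ otherwise. *)

From mathcomp Require Import all_boot.
Set Implicit Arguments. Unset Strict Implicit. Unset Printing Implicit Defensive.

(* Lucas numbers with the standard offset: lucas 0 = 2, lucas 1 = 1, lucas 2 = 3,
   lucas (n+2) = lucas n + lucas (n+1).  The paper's sequence is L_1, L_2, ...
   i.e. lucas n for n >= 1. *)
Fixpoint lucas_aux (n : nat) : nat * nat :=
  match n with
  | 0 => (2, 1)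
  | k.+1 => let (a, b) := lucas_aux k in (b, a + b)
  end.

Definition lucas (n : nat) : nat := (lucas_aux n).1.

Definition complete_mod (L : nat -> nat) (m : nat) : Prop :=
  forall r : nat, r < m -> exists n : nat, 1 <= n /\ L n = r %[mod m].

From mathcomp Require Import all_boot all_order all_algebra zify ring lra.
Set Implicit Arguments. Unset Strict Implicit. Unset Printing Implicit Defensive.
Import Order.TTheory GRing.Theory Num.Theory.

(* For m = 3^(j+1) we lift residues 3-adically: with the period
   P = 8 3^j, the identities L_(n+P) = L_n F_(P-1) + L_(n+1) F_P and
   v_3(F_P) = j + 1 give 2 (L_(n+kP) - L_n) = - k F_P L_(n+2) modulo 3^(j+2),
   so a residue hit modulo 3^(j+1) is hit modulo 3^(j+2) by one of L_(n+kP),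
   k = 0, 1, 2.  The moduli 2, 4, 6, 7, 14 are settled by computation.

   Completeness passes to divisors.  A finite computation shows
   that 5, 8, 11, 12, 13, 17, 18, 19, 21, 28, 49 are defective.  For a prime
   p >= 23 an estimate of quadratic character sums over 'F_p produces a with
   chi(a^2 - 1) = chi(a^2 + 1) = -chi(5); the identity L_n^2 - 5 F_n^2 = 4 (-1)^n
   then shows that 2a is not a Lucas residue.  So every prime divisor of a
   complete m is 2, 3 or 7, and an induction on m, splitting off one prime
   factor at a time, leaves exactly the listed moduli. *)

Section FibonacciIdentities.
Local Open Scope ring_scope.

(* Fibonacci numbers as integers, computed through consecutive pairs so that
   concrete values reduce by computation. *)
Fixpoint fib_pair (n : nat) : int * int :=
  match n with 0 => (0, 1) | k.+1 => ((fib_pair k).2, (fib_pair k).1 + (fib_pair k).2) end.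
Definition fib (n : nat) : int := (fib_pair n).1.

Definition lucz (n : nat) : int := (lucas n)%:Z.

Lemma fibSS n : fib n.+2 = fib n + fib n.+1.
Proof. by []. Qed.

Lemma lucasSS n : lucas n.+2 = (lucas n + lucas n.+1)%N.
Proof. by rewrite /lucas /=; case: (lucas_aux n). Qed.

Lemma luczSS n : lucz n.+2 = lucz n + lucz n.+1.
Proof. by rewrite /lucz lucasSS PoszD. Qed.

Lemma recurrence_add (x : nat -> int) (xSS : forall n, x n.+2 = x n + x n.+1) n k :
  x (n + k.+1)%N = x n * fib k + x n.+1 * fib k.+1.
Proof.
suff [] : x (n + k.+1)%N = x n * fib k + x n.+1 * fib k.+1 /\
          x (n + k.+2)%N = x n * fib k.+1 + x n.+1 * fib k.+2 by [].
elim: k => [|k [IH1 IH2]]; first by rewrite !addnS !addn0 xSS /fib /=; split; ring.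
split; first exact: IH2.
rewrite !addnS in IH1 IH2 *; rewrite xSS IH1 IH2 !fibSS; ring.
Qed.

Lemma cassini n : fib n.+1 ^+ 2 - fib n * fib n.+1 - fib n ^+ 2 = (-1) ^+ n.
Proof.
elim: n => [|n IH]; first by [].
by rewrite fibSS [(-1) ^+ _.+1]exprS -IH; ring.
Qed.

Lemma lucz_fib n : lucz n = 2 * fib n.+1 - fib n.
Proof.
suff [] : lucz n = 2 * fib n.+1 - fib n /\ lucz n.+1 = 2 * fib n.+2 - fib n.+1 by [].
elim: n => [|n [IH1 IH2]]; first by [].
split; first exact: IH2.
by rewrite luczSS IH1 IH2 !fibSS; ring.
Qed.

Lemma lucas_fib_norm n : lucz n ^+ 2 - 5 * fib n ^+ 2 = 4 * (-1) ^+ n.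
Proof. by rewrite lucz_fib -cassini; ring. Qed.

End FibonacciIdentities.

Section PowersOfThree.
Local Open Scope ring_scope.

Lemma indivisible3M x y : ~~ (3 %| x)%Z -> ~~ (3 %| y)%Z -> ~~ (3 %| x * y)%Z.
Proof. by rewrite !unfold_in /= abszM Euclid_dvdM // => /negPf-> /negPf->. Qed.

Lemma coprime_pow3 k y : ~~ (3 %| y)%Z -> coprimez (3 ^+ k) y.
Proof.
case: k => [|k] h; first by apply/coprimezP; exists (1, 0); rewrite /= expr0 mul1r mul0r addr0.
by rewrite coprimez_pexpl // /coprimez; move: h; rewrite unfold_in /= -prime_coprime.
Qed.

(* Every sequence obeying the Fibonacci recurrence has period 8 modulo 3,
   because F_7 = 13 = 1 and F_8 = 21 = 0 modulo 3. *)
Lemma recurrence_period_mod3 (x : nat -> int) (xSS : forall n, x n.+2 = x n + x n.+1) n t :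
  (3 %| x (n + 8 * t)%N - x n)%Z.
Proof.
elim: t => [|t IH]; first by rewrite muln0 addn0 subrr dvdz0.
have -> : (n + 8 * t.+1 = (n + 8 * t) + 7.+1)%N by rewrite mulnS; lia.
rewrite recurrence_add // (_ : fib 7 = 13) // (_ : fib 8 = 21) //.
by move: IH; set a := x _; set b := x _; lia.
Qed.

(* Modulo 3 the Lucas numbers run through 2,1,0,1,1,2,0,2; in particular
   3 does not divide L_(n+2) when 4 does not divide n. *)
Lemma lucas_indivisible3 n : (n %% 4 != 0)%N -> ~~ (3 %| lucz n.+2)%Z.
Proof.
move=> hn; rewrite (divn_eq n.+2 8) addnC mulnC.
have := recurrence_period_mod3 luczSS (n.+2 %% 8) (n.+2 %/ 8).
have : (n.+2 %% 8 < 8)%N by rewrite ltn_mod.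
have : (n.+2 %% 8 != 2)%N && (n.+2 %% 8 != 6)%N by lia.
move: (n.+2 %% 8)%N (n.+2 %/ 8)%N => s q; move: (lucz (s + 8 * q)%N) => v.
by case: s => [|[|[|[|[|[|[|[|s]]]]]]]] //= _ _; rewrite /lucz /lucas /=; lia.
Qed.

(* The Pisano period of 3^(j+1). *)
Definition pisano3 (j : nat) : nat := (8 * 3 ^ j)%N.

Lemma pisano3_predK j : pisano3 j = (pisano3 j).-1.+1.
Proof. by rewrite prednK // muln_gt0 expn_gt0. Qed.

Lemma fib_triple q : fib (3 * q.+1)%N =
  fib q.+1 * (3 * fib q ^+ 2 + 3 * fib q * fib q.+1 + 2 * fib q.+1 ^+ 2).
Proof.
have -> : (3 * q.+1 = q.+1 + q.+1 + q.+1)%N by lia.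
rewrite (recurrence_add fibSS (q.+1 + q.+1)) -addnS !(recurrence_add fibSS) !fibSS; ring.
Qed.

(* The 3-adic valuation of F_(8 3^j) is exactly j + 1: induction on j with the
   tripling formula, Cassini's identity showing the new cofactor prime to 3. *)
Lemma fib_pisano3 j : exists beta, fib (pisano3 j) = 3 ^+ j.+1 * beta /\ ~~ (3 %| beta)%Z.
Proof.
elim: j => [|j [be [hb hnb]]]; first by exists 7.
have -> : pisano3 j.+1 = (3 * (pisano3 j).-1.+1)%N by rewrite -pisano3_predK /pisano3 expnS; lia.
have cas := cassini (pisano3 j).-1.
rewrite fib_triple -!pisano3_predK hb in cas *.
set a := fib (pisano3 j).-1 in cas *.
exists (be * (a ^+ 2 + a * (3 ^+ j.+1 * be) + 2 * (3 ^+ j * be) * (3 ^+ j.+1 * be))).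
split; first by rewrite !exprS; ring.
apply: indivisible3M => //.
have hs : (-1) ^+ (pisano3 j).-1 = 1 :> int \/ (-1) ^+ (pisano3 j).-1 = -1 :> int.
  by rewrite -signr_odd; case: (odd _); [right|left].
move: cas hs; rewrite (exprS 3 j); move: ((-1) ^+ _) (3 ^+ j) => s t cas hs.
have -> : a ^+ 2 + a * (3 * t * be) + 2 * (t * be) * (3 * t * be) =
          15 * (t * be) ^+ 2 - s by rewrite -cas; ring.
by move: (t * be) => w; lia.
Qed.

(* 3^(j+2) divides 2 F_(P-1) + F_P - 2 for the period P = 8 3^j: by Cassini
   (P - 1 is odd) its product with 2 F_(P-1) + F_P + 2, a unit modulo 3, is
   5 F_P^2, which 3^(2j+2) divides. *)
Lemma fib_pisano3_pred j : (3 ^+ j.+2 %| 2 * fib (pisano3 j).-1 + fib (pisano3 j) - 2)%Z.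
Proof.
have [be [hb _]] := fib_pisano3 j.
have pred_eq : (pisano3 j).-1 = (7 + 8 * (3 ^ j - 1))%N.
  by rewrite /pisano3; have := expn_gt0 3 j; lia.
have ha : (3 %| fib (pisano3 j).-1 - 13)%Z.
  by rewrite pred_eq; apply: (recurrence_period_mod3 fibSS).
have cas := cassini (pisano3 j).-1.
rewrite -pisano3_predK -signr_odd pred_eq oddD oddM /= expr1 -pred_eq in cas.
rewrite hb in cas *; set a := fib _ in ha cas *.
have hc : coprimez (3 ^+ j.+2) (2 * a + 3 ^+ j.+1 * be + 2).
  by apply: coprime_pow3; rewrite exprS; move: (3 ^+ j * be) => w; lia.
rewrite -(Gauss_dvdzl _ hc).
have -> : (2 * a + 3 ^+ j.+1 * be - 2) * (2 * a + 3 ^+ j.+1 * be + 2) =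
          (5 * 3 ^+ j * be ^+ 2) * 3 ^+ j.+2.
  move: cas; rewrite [3 ^+ j.+2]exprS [3 ^+ j.+1]exprS; move: (3 ^+ j) => t cas.
  apply/eqP; rewrite -subr_eq0; apply/eqP.
  transitivity (-4 * ((3 * t * be) ^+ 2 - a * (3 * t * be) - a ^+ 2 + 1)); first by ring.
  by rewrite cas; ring.
exact: dvdz_mull.
Qed.

Lemma lucas_shift_pisano3 j n :
  (3 ^+ j.+2 %| 2 * (lucz (n + pisano3 j) - lucz n) + fib (pisano3 j) * lucz n.+2)%Z.
Proof.
have [be [hb _]] := fib_pisano3 j.
have /dvdzP [c hc] := fib_pisano3_pred j.
rewrite pisano3_predK (recurrence_add luczSS) -pisano3_predK luczSS.
apply/dvdzP; exists (c * lucz n + be * lucz n.+1).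
have -> : 2 * (lucz n * fib (pisano3 j).-1 + lucz n.+1 * fib (pisano3 j) - lucz n) +
    fib (pisano3 j) * (lucz n + lucz n.+1) =
    lucz n * (2 * fib (pisano3 j).-1 + fib (pisano3 j) - 2) +
    3 * fib (pisano3 j) * lucz n.+1 by ring.
by rewrite hc hb !exprS; ring.
Qed.

(* Iterating: 2 (L_(n+kP) - L_n) = - k F_P L_(n+2)  modulo 3^(j+2), since
   L_(n+kP+2) = L_(n+2) modulo 3 and 3^(j+1) divides F_P. *)
Lemma lucas_shift_pisano3_iter j n k :
  (3 ^+ j.+2 %| 2 * (lucz (n + k * pisano3 j) - lucz n) +
                k%:Z * fib (pisano3 j) * lucz n.+2)%Z.
Proof.
have [be [hb _]] := fib_pisano3 j.
elim: k => [|k IH]; first by rewrite mul0n addn0 subrr mulr0 !mul0r addr0 dvdz0.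
set n' := (n + k * pisano3 j)%N in IH.
have -> : (n + k.+1 * pisano3 j = n' + pisano3 j)%N by rewrite mulSn /n'; lia.
have /dvdzP [c1 h1] := lucas_shift_pisano3 j n'.
move/dvdzP: IH => [c2 h2].
have /dvdzP [v hv] : (3 %| lucz n'.+2 - lucz n.+2)%Z.
  have -> : (n'.+2 = n.+2 + 8 * (k * 3 ^ j))%N by rewrite /n' /pisano3; lia.
  exact: (recurrence_period_mod3 luczSS).
apply/dvdzP; exists (c1 + c2 - be * v).
have -> : 2 * (lucz (n' + pisano3 j) - lucz n) + k.+1%:Z * fib (pisano3 j) * lucz n.+2 =
  (2 * (lucz (n' + pisano3 j) - lucz n') + fib (pisano3 j) * lucz n'.+2)
  + (2 * (lucz n' - lucz n) + k%:Z * fib (pisano3 j) * lucz n.+2)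
  - fib (pisano3 j) * (lucz n'.+2 - lucz n.+2) by rewrite intS; ring.
by rewrite h1 h2 hv hb !exprS; ring.
Qed.

(* Lifting step: if L_n = r modulo 3^(j+1) with 4 not dividing n, then one of
   L_n, L_(n+P), L_(n+2P) equals r modulo 3^(j+2); this uses that F_P / 3^(j+1)
   and L_(n+2) are units modulo 3. *)
Lemma lucas_lift3 j n (r : int) : (n %% 4 != 0)%N -> (3 ^+ j.+1 %| lucz n - r)%Z ->
  exists n', (n' %% 4 != 0)%N /\ (3 ^+ j.+2 %| lucz n' - r)%Z.
Proof.
move=> hn /dvdzP [t ht].
have [be [hb hnb]] := fib_pisano3 j.
have : ~~ (3 %| be * lucz n.+2)%Z by apply: indivisible3M => //; exact: lucas_indivisible3.
move hg : (be * lucz n.+2) => g hg3.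
have [k hk] : exists k : nat, (3 %| 2 * t - k%:Z * g)%Z.
  have : (3 %| 2 * t)%Z \/ (3 %| 2 * t - g)%Z \/ (3 %| 2 * t - 2 * g)%Z by move: hg3; clear; lia.
  by case=> [h|[h|h]]; [exists 0%N | exists 1%N | exists 2%N]; rewrite ?mul0r ?subr0 ?mul1r.
exists (n + k * pisano3 j)%N; split.
  by rewrite /pisano3 mulnCA; move: (k * 3 ^ j)%N => w; lia.
have hc2 : coprimez (3 ^+ j.+2) 2 by apply: coprime_pow3.
rewrite -(Gauss_dvdzr _ hc2).
have /dvdzP [c hc] := lucas_shift_pisano3_iter j n k.
move/dvdzP: hk => [e he].
apply/dvdzP; exists (c + e).
have -> : 2 * (lucz (n + k * pisano3 j) - r) =
   (2 * (lucz (n + k * pisano3 j) - lucz n) + k%:Z * fib (pisano3 j) * lucz n.+2)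
   - k%:Z * fib (pisano3 j) * lucz n.+2 + 2 * (lucz n - r) by ring.
rewrite hc ht hb [3 ^+ j.+2]exprS [3 ^+ j.+1]exprS.
move: (3 ^+ j) => T; apply/eqP; rewrite -subr_eq0; apply/eqP.
transitivity ((3 * T) * (2 * t - k%:Z * g - e * 3)); first by rewrite -hg; ring.
by rewrite he subrr mulr0.
Qed.

Lemma lucas_hits_pow3 j (r : int) :
  exists n, (n %% 4 != 0)%N /\ (3 ^+ j.+1 %| lucz n - r)%Z.
Proof.
elim: j => [|j [n [hn hd]]]; last exact: lucas_lift3 hn hd.
have : (3 %| 3 - r)%Z \/ (3 %| 1 - r)%Z \/ (3 %| 11 - r)%Z by lia.
by case=> [h|[h|h]]; [exists 2%N | exists 1%N | exists 5%N].
Qed.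

Lemma complete_pow3 j : (1 <= j)%N -> complete_mod lucas (3 ^ j).
Proof.
case: j => [//|j] _ r hr.
have [n [hn hd]] := lucas_hits_pow3 j r%:Z.
exists n; split; first by move: hn; lia.
apply/eqP; rewrite -(eqz_nat (lucas n %% 3 ^ j.+1)%N) -!modz_nat.
apply/eqP; apply/eqP; rewrite eqz_mod_dvd.
by rewrite -[Posz (3 ^ _)]natz natrX.
Qed.

End PowersOfThree.

Definition lucas_step (m : nat) (s : nat * nat) : nat * nat := (s.2, (s.1 + s.2) %% m).
Definition lucas_state (m n : nat) : nat * nat := iter n (lucas_step m) (2 %% m, 1 %% m).

Lemma lucas_stateE m n : lucas_state m n = (lucas n %% m, (lucas_aux n).2 %% m).
Proof.
elim: n => [//|n IH]; rewrite /lucas_state iterS -/(lucas_state m n) IH /lucas_step /lucas /=.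
by case: (lucas_aux n) => a b /=; rewrite modnDm.
Qed.

Definition lucas_residues (m K : nat) : seq nat :=
  [seq s.1 | s <- traject (lucas_step m) (lucas_state m 1) K].

Lemma lucas_residuesP m K r :
  reflect (exists2 n, 0 < n <= K & lucas n %% m = r) (r \in lucas_residues m K).
Proof.
apply: (iffP mapP) => [[s /trajectP [i hi ->] ->]|[n /andP [n0 hn] <-]].
  by exists i.+1; [lia | rewrite /lucas_state -iterD addn1 -/(lucas_state m _) lucas_stateE].
exists (lucas_state m n); last by rewrite lucas_stateE.
apply/trajectP; exists n.-1; first lia.
by rewrite /lucas_state -iterD addn1 prednK.
Qed.

Definition complete_check (m K : nat) : bool := all (fun r => r \in lucas_residues m K) (iota 0 m).

Lemma complete_checkP m K : complete_check m K -> complete_mod lucas m.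
Proof.
move=> /allP hall r hr.
have /lucas_residuesP [n /andP [n0 _] hn] : r \in lucas_residues m K.
  by apply: hall; rewrite mem_iota.
by exists n; split; last rewrite hn modn_small.
Qed.

Definition defect_check (m K : nat) : bool :=
  [&& 0 < K, lucas_state m K.+1 == lucas_state m 1 & ~~ complete_check m K].

Lemma defect_checkP m K : defect_check m K -> ~ complete_mod lucas m.
Proof.
case/and3P => K0 /eqP hper /allPn [r]; rewrite mem_iota /= => hr hmiss hc.
have [n [n0 hn]] := hc r hr.
have hshift q i : lucas_state m (i + q * K).+1 = lucas_state m i.+1.
  elim: q => [|q IH]; first by rewrite addn0.
  have stateD a b : lucas_state m (a + b) = iter a (lucas_step m) (lucas_state m b).
    exact: iterD.
  rewrite (_ : (i + q.+1 * K).+1 = K + (i + q * K).+1); last by rewrite mulSn; lia.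
  rewrite stateD IH -stateD (_ : K + i.+1 = i + K.+1); last lia.
  by rewrite stateD hper -stateD addn1.
apply: (negP hmiss); apply/lucas_residuesP.
exists ((n.-1 %% K).+1); first by rewrite ltn_mod K0.
have := hshift (n.-1 %/ K) (n.-1 %% K); rewrite addnC -divn_eq prednK // !lucas_stateE.
by case=> <- _; rewrite hn modn_small.
Qed.

Lemma complete_small m : m \in [:: 2; 4; 6; 7; 14] -> complete_mod lucas m.
Proof.
move=> hm; apply: (@complete_checkP m (6 * m)).
by move: m hm; apply/allP; vm_compute.
Qed.

(* Moduli m for which the Lucas sequence is defective, each with the period K
   of the sequence modulo m. *)
Definition defect_certificates : seq (nat * nat) :=
  [:: (5, 4); (8, 12); (11, 10); (12, 24); (13, 28); (17, 36); (18, 24); (19, 18);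
      (21, 16); (28, 48); (49, 112)].

Lemma defective_small m : m \in [seq c.1 | c <- defect_certificates] -> ~ complete_mod lucas m.
Proof.
have /allP certs : all (fun c => defect_check c.1 c.2) defect_certificates by vm_compute.
by case/mapP => c /certs /defect_checkP + ->.
Qed.

Section QuadraticCharacter.
Local Open Scope ring_scope.
Variable F : finFieldType.
Hypothesis two_neq0 : (2 : F) != 0.

Definition issq (x : F) : bool := [exists y : F, y ^+ 2 == x].

Definition chi (x : F) : int := if x == 0 then 0 else if issq x then 1 else -1.

Definition nroots (x : F) : nat := #|[pred y : F | y ^+ 2 == x]|.

Lemma issqP x : reflect (exists y, y ^+ 2 = x) (issq x).
Proof. by apply: (iffP existsP) => [[y /eqP h]|[y h]]; exists y => //; apply/eqP. Qed.

Lemma chi0 : chi 0 = 0. Proof. by rewrite /chi eqxx. Qed.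

Lemma chi_eq0 x : (chi x == 0) = (x == 0).
Proof. by rewrite /chi; case: (x == 0) => //; case: (issq x). Qed.

Lemma chi_unit x : x != 0 -> chi x = 1 \/ chi x = -1.
Proof. by rewrite /chi => /negPf ->; case: (issq x); [left|right]. Qed.

Lemma chi_bounds x : -1 <= chi x <= 1.
Proof. by rewrite /chi; case: (x == 0); case: (issq x). Qed.

Lemma nrootsE x : (nroots x)%:Z = 1 + chi x.
Proof.
rewrite /nroots /chi; have [->|xn0] := eqVneq x 0.
  by rewrite (eq_card (B := pred1 (0 : F))) ?card1 // => y; rewrite !inE sqrf_eq0.
case: (issqP x) => [[z hz]|hn]; last first.
  rewrite (eq_card (B := pred0)) ?card0 // => y.
  by rewrite !inE; apply/negP => /eqP h; apply: hn; exists y.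
rewrite (eq_card (B := pred2 z (- z))) ?card2; last by move=> y; rewrite !inE -hz eqf_sqr.
suff -> : z != - z by [].
apply: contra xn0 => /eqP zNz; rewrite -hz.
have : z * 2 = 0 by rewrite mulrDr mulr1 {1}zNz addNr.
by move/eqP; rewrite sqrf_eq0 mulf_eq0 (negPf two_neq0) orbF.
Qed.

Lemma sum_sq_indicator c : \sum_a ((a ^+ 2 == c)%:R : int) = (nroots c)%:Z.
Proof.
rewrite /nroots -natz -sumr_const [RHS]big_mkcond /=; apply: eq_bigr => y _.
by rewrite inE; case: (y ^+ 2 == c).
Qed.

Lemma sum_squares (g : F -> int) : \sum_a g (a ^+ 2) = \sum_u (1 + chi u) * g u.
Proof.
rewrite (partition_big (fun a : F => a ^+ 2) predT) //=; apply: eq_bigr => u _.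
rewrite -nrootsE (eq_bigr (fun _ => g u)); last by move=> a /eqP ->.
by rewrite sumr_const -mulr_natl natz.
Qed.

Lemma sum_chi : \sum_u chi u = 0.
Proof.
have := sum_squares (fun _ => 1); under [RHS]eq_bigr do rewrite mulr1.
rewrite big_split /= => h.
by apply: (addrI (\sum_(u : F) (1 : int))); rewrite addr0 -h.
Qed.

Lemma issq_sq_mul t x : t != 0 -> issq (t ^+ 2 * x) = issq x.
Proof.
move=> tn0; apply/issqP/issqP => [[y hy]|[y hy]]; last by exists (t * y); rewrite exprMn hy.
by exists (y / t); rewrite expr_div_n hy mulrC mulrA mulVf ?mul1r ?expf_neq0.
Qed.

Lemma chi_sq_mul t x : t != 0 -> chi (t ^+ 2 * x) = chi x.
Proof. by move=> tn0; rewrite /chi issq_sq_mul // mulf_eq0 expf_eq0 /= (negPf tn0). Qed.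

Lemma chi_sq t : t != 0 -> chi (t ^+ 2) = 1.
Proof.
move=> tn0; rewrite -(mulr1 (t ^+ 2)) chi_sq_mul // /chi oner_eq0.
by have /issqP -> : exists y : F, y ^+ 2 = 1 by exists 1; rewrite expr1n.
Qed.

Lemma chi1 : chi 1 = 1.
Proof. by rewrite -(expr1n F 2) chi_sq ?oner_eq0. Qed.

(* Half of the nonzero elements are squares: chi sums to zero. *)
Lemma card_squares_nonsquares :
  #|[set x : F | (x != 0) && issq x]| = #|[set x : F | (x != 0) && ~~ issq x]|.
Proof.
have chiE x : chi x = (x \in [set x : F | (x != 0) && issq x])%:R -
                      (x \in [set x : F | (x != 0) && ~~ issq x])%:R.
  by rewrite /chi !inE; case: (x == 0); case: (issq x).
have card_sum (A : {set F}) : \sum_x ((x \in A)%:R : int) = #|A|%:R.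
  by rewrite -sumr_const [RHS]big_mkcond /=; apply: eq_bigr => x _; case: (x \in A).
have := sum_chi; under eq_bigr do rewrite chiE.
by rewrite sumrB !card_sum => /eqP; rewrite subr_eq0 !natz eqz_nat => /eqP.
Qed.

(* Hence multiplication by a nonsquare maps the nonzero squares onto the
   nonsquares, and the product of two nonsquares is a square. *)
Lemma nonsquare_mul n m : n != 0 -> ~~ issq n -> m != 0 -> ~~ issq m -> issq (n * m).
Proof.
move=> nn0 nsq mn0 msq.
set Qs := [set x : F | (x != 0) && issq x]; set Ns := [set x : F | (x != 0) && ~~ issq x].
have sub : [set n * x | x in Qs] \subset Ns.
  apply/subsetP => y /imsetP [x]; rewrite !inE => /andP [xn0 /issqP [z hz]] ->.
  rewrite mulf_neq0 //=; apply: contra nsq => /issqP [w hw].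
  have zn0 : z != 0 by apply: contraNneq xn0 => z0; rewrite -hz z0 expr0n.
  by apply/issqP; exists (w / z); rewrite expr_div_n hw hz mulfK // expf_neq0.
have eqs : [set n * x | x in Qs] = Ns.
  apply/eqP; rewrite eqEcard sub /= card_imset; last exact: mulfI.
  by rewrite card_squares_nonsquares.
have : m \in Ns by rewrite !inE mn0.
rewrite -eqs => /imsetP [x]; rewrite !inE => /andP [_ /issqP [z hz]] ->.
by apply/issqP; exists (n * z); rewrite mulrA -expr2 exprMn hz.
Qed.

Lemma chiM x y : chi (x * y) = chi x * chi y.
Proof.
have [->|xn0] := eqVneq x 0; first by rewrite mul0r chi0 mul0r.
have [->|yn0] := eqVneq y 0; first by rewrite mulr0 chi0 mulr0.
case: (boolP (issq x)) => [/issqP [a ha]|hx].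
  have an0 : a != 0 by apply: contraNneq xn0 => a0; rewrite -ha a0 expr0n.
  by rewrite -ha chi_sq_mul // chi_sq // mul1r.
case: (boolP (issq y)) => [/issqP [b hb]|hy].
  have bn0 : b != 0 by apply: contraNneq yn0 => b0; rewrite -hb b0 expr0n.
  by rewrite -hb mulrC chi_sq_mul // chi_sq // mulr1.
rewrite /chi (negPf xn0) (negPf yn0) mulf_eq0 (negPf xn0) (negPf yn0) /=.
by rewrite nonsquare_mul // (negPf hx) (negPf hy).
Qed.

Lemma sum_indicator0 : \sum_(u : F) ((u == 0)%:R : int) = 1.
Proof. by rewrite (bigD1 0) //= eqxx big1 ?addr0 // => u /negPf ->. Qed.

Lemma sum_chi_shift c : \sum_u chi (u - c) = 0.
Proof. by rewrite -[RHS]sum_chi [RHS](reindex_inj (addIr (- c))). Qed.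

(* For c != 0: sum_u chi(u) chi(u - c) = -1, by writing u (u - c) = u^2 (1 - c/u)
   and noting that u |-> 1 - c/u is injective and misses only 1. *)
Lemma sum_chi_chi_shift c : c != 0 -> \sum_u chi u * chi (u - c) = -1.
Proof.
move=> cn0.
have hinj : injective (fun u : F => 1 - c / u).
  move=> u v /= /eqP; rewrite (inj_eq (addrI 1)) eqr_opp => /eqP.
  by move=> /(mulfI cn0) /invr_inj.
transitivity (\sum_u (chi (1 - c / u) - ((u == 0)%:R : int))).
  apply: eq_bigr => u _; have [->|un0] := eqVneq u 0.
    by rewrite chi0 mul0r invr0 mulr0 subr0 chi1 subrr.
  rewrite subr0 -chiM (_ : u * (u - c) = u ^+ 2 * (1 - c / u)) ?chi_sq_mul //.
  by field.
rewrite sumrB sum_indicator0.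
have -> : \sum_u chi (1 - c / u) = 0 by rewrite -[RHS]sum_chi [RHS](reindex_inj hinj).
by rewrite sub0r.
Qed.

Lemma sum_chi_sq_shift c : c != 0 -> \sum_x chi (x ^+ 2 - c) = -1.
Proof.
move=> cn0; rewrite (sum_squares (fun u => chi (u - c))).
under eq_bigr do rewrite mulrDl mul1r.
by rewrite big_split /= sum_chi_shift sum_chi_chi_shift // add0r.
Qed.

Lemma sum_chi_pair A B : \sum_c chi (A - c) * chi (B - c) =
  if A == B then #|F|%:R - 1 else -1.
Proof.
have [<-|AB] := eqVneq A B.
  transitivity (\sum_(c : F) (1 - ((c - A == 0)%:R : int))).
    apply: eq_bigr => c _; have [hc|hc] := eqVneq (c - A) 0.
      by rewrite -opprB hc oppr0 chi0 mul0r subrr.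
    have hc' : A - c != 0 by rewrite -opprB oppr_eq0.
    by case: (chi_unit hc') => ->.
  rewrite sumrB sumr_const; congr (_ - _).
  rewrite -[RHS]sum_indicator0.
  by rewrite [RHS](reindex_inj (addIr (- A))).
have d0 : (A - B) / 2 != 0 by rewrite mulf_neq0 ?invr_eq0 // subr_eq0.
rewrite -(sum_chi_sq_shift (expf_neq0 2 d0)) [LHS](reindex_inj (addIr ((A + B) / 2))).
by apply: eq_bigr => x _; rewrite -chiM; congr chi; field.
Qed.

Definition phi (c : F) : int := \sum_x chi x * chi (x ^+ 2 - c).

Lemma phi_scale c t : t != 0 -> phi (c * t ^+ 2) = chi t * phi c.
Proof.
move=> tn0; rewrite /phi (reindex_inj (mulfI tn0)) /= big_distrr /=.
apply: eq_bigr => y _.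
have -> : (t * y) ^+ 2 - c * t ^+ 2 = t ^+ 2 * (y ^+ 2 - c) by ring.
by rewrite chi_sq_mul // chiM mulrA.
Qed.

(* Expanding the square and summing over c with sum_chi_pair. *)
Lemma sum_phi_sq : \sum_c phi c ^+ 2 =
  \sum_x \sum_y chi x * chi y * (#|F|%:R * (x ^+ 2 == y ^+ 2)%:R - 1).
Proof.
transitivity (\sum_c \sum_x \sum_y
                (chi x * chi y) * (chi (x ^+ 2 - c) * chi (y ^+ 2 - c))).
  apply: eq_bigr => c _; rewrite expr2 /phi big_distrlr /=.
  by apply: eq_bigr => x _; apply: eq_bigr => y _; ring.
rewrite exchange_big /=; apply: eq_bigr => x _.
rewrite exchange_big /=; apply: eq_bigr => y _.
rewrite -big_distrr /= sum_chi_pair; congr (_ * _).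
by case: (x ^+ 2 == y ^+ 2); rewrite /= ?mulr1 ?mulr0 ?sub0r.
Qed.

Lemma sum_phi_sq_le : \sum_c phi c ^+ 2 <= 2 * (#|F|%:R : int) ^+ 2.
Proof.
set q : int := #|F|%:R; have q0 : 0 <= q by [].
rewrite sum_phi_sq.
under eq_bigr do under eq_bigr do rewrite mulrBr mulr1.
under eq_bigr do rewrite sumrB.
rewrite sumrB.
have -> : \sum_x \sum_y chi x * chi y = 0.
  by rewrite big1 // => x _; rewrite -big_distrr /= sum_chi mulr0.
rewrite subr0 -[2 * q ^+ 2](_ : \sum_(x : F) 2 * q = _); last first.
  by rewrite sumr_const -mulr_natr expr2 -/q; lra.
apply: ler_sum => x _.
apply: (@le_trans _ _ (\sum_y q * (y ^+ 2 == x ^+ 2)%:R)).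
  apply: ler_sum => y _; rewrite eq_sym.
  case: (y ^+ 2 == x ^+ 2); rewrite /= ?mulr1 ?mulr0 //.
  have : chi x * chi y <= 1.
    by have := chi_bounds x; have := chi_bounds y; move: (chi x) (chi y) => a b; nia.
  by move: (chi x * chi y) => u; nia.
rewrite -big_distrr /=.
by rewrite sum_sq_indicator nrootsE; have := chi_bounds (x ^+ 2); nia.
Qed.

(* Since phi(t^2) = chi(t) phi(1) for t != 0, the second moment bound gives
   (q - 1) phi(1)^2 <= 4 q^2, i.e. |phi(1)| is of order 2 sqrt q. *)
Lemma phi1_sq_bound : ((#|F|%:R : int) - 1) * phi 1 ^+ 2 <= 4 * (#|F|%:R : int) ^+ 2.
Proof.
have up : \sum_t phi (t ^+ 2) ^+ 2 <= 4 * (#|F|%:R : int) ^+ 2.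
  rewrite (sum_squares (fun u => phi u ^+ 2)).
  apply: (@le_trans _ _ (\sum_u 2 * phi u ^+ 2)).
    apply: ler_sum => u _; have := chi_bounds u; have := sqr_ge0 (phi u).
    by move: (phi u ^+ 2) (chi u) => a b; nia.
  by rewrite -big_distrr /=; have := sum_phi_sq_le; lra.
apply: le_trans up.
have -> : (#|F|%:R : int) - 1 = \sum_(t : F) ((t != 0)%:R : int).
  rewrite (eq_bigr (fun t => 1 - ((t == 0)%:R : int))); last by move=> t _; case: (t == 0).
  by rewrite sumrB sum_indicator0 sumr_const.
rewrite big_distrl /=; apply: ler_sum => t _.
have [->|tn0] := eqVneq t 0; first by rewrite mul0r sqr_ge0.
rewrite /= mul1r -(mul1r (t ^+ 2)) phi_scale // exprMn.
by case: (chi_unit tn0) => ->; rewrite ?sqrrN expr1n mul1r.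
Qed.

(* For e = 1 or -1, with q = #|F|:
     sum_a (1 - e chi(a^2 - 1)) (1 - e chi(a^2 + 1)) = q + 2 e - 1 + phi 1,
   using chi(a^2 - 1) chi(a^2 + 1) = chi(a^4 - 1) and sum_chi_sq_shift. *)
Lemma sum_sign_pattern (e : int) : e = 1 \/ e = -1 ->
  \sum_a (1 - e * chi (a ^+ 2 - 1)) * (1 - e * chi (a ^+ 2 + 1)) =
  (#|F|%:R : int) + 2 * e - 1 + phi 1.
Proof.
move=> he; have e2 : e ^+ 2 = 1 by case: he => ->.
have m1n0 : (-1 : F) != 0 by rewrite oppr_eq0 oner_eq0.
have sum_a4 : \sum_a chi ((a ^+ 2) ^+ 2 - 1) = -1 + phi 1.
  rewrite (sum_squares (fun u => chi (u ^+ 2 - 1))).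
  under eq_bigr do rewrite mulrDl mul1r.
  by rewrite big_split /= sum_chi_sq_shift ?oner_eq0.
transitivity (\sum_(a : F) (1 - e * chi (a ^+ 2 - 1) - e * chi (a ^+ 2 - (-1))
                            + e ^+ 2 * chi ((a ^+ 2) ^+ 2 - 1))).
  apply: eq_bigr => a _; rewrite opprK.
  have -> : (a ^+ 2) ^+ 2 - 1 = (a ^+ 2 - 1) * (a ^+ 2 + 1) by ring.
  by rewrite chiM; ring.
rewrite !big_split /= !sumrN -!big_distrr /= sum_a4 !sum_chi_sq_shift ?oner_eq0 //.
by rewrite sumr_const e2; ring.
Qed.

(* Unless some a has chi(a^2 - 1) = chi(a^2 + 1) = -e, every term of the sum
   above is at most 2 and vanishes unless a^2 = 1 or a^2 = -1. *)
Lemma sum_sign_pattern_small (e : int) : e = 1 \/ e = -1 ->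
  (forall a, ~ (chi (a ^+ 2 - 1) = - e /\ chi (a ^+ 2 + 1) = - e)) ->
  \sum_a (1 - e * chi (a ^+ 2 - 1)) * (1 - e * chi (a ^+ 2 + 1)) <= 8.
Proof.
move=> he hno.
apply: (@le_trans _ _ (2 * (nroots 1)%:Z + 2 * (nroots (-1))%:Z)); last first.
  by rewrite !nrootsE; have := chi_bounds 1; have := chi_bounds (-1); lia.
rewrite -!sum_sq_indicator !big_distrr -big_split /=; apply: ler_sum => a _.
have hna := hno a.
have c1 : (chi (a ^+ 2 - 1) == 0) = (a ^+ 2 == 1) by rewrite chi_eq0 subr_eq0.
have c2 : (chi (a ^+ 2 + 1) == 0) = (a ^+ 2 == -1).
  by rewrite chi_eq0 -(subr_eq0 _ (-1)) opprK.
rewrite -c1 -c2; move: hna.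
have := chi_bounds (a ^+ 2 - 1); have := chi_bounds (a ^+ 2 + 1).
move: (chi (a ^+ 2 - 1)) (chi (a ^+ 2 + 1)) => x y hy hx.
have : x = -1 \/ x = 0 \/ x = 1 by lia.
have : y = -1 \/ y = 0 \/ y = 1 by lia.
by case: he => ->; case=> [->|[->|->]]; case=> [->|[->|->]] => //= h; exfalso; apply: h.
Qed.

(* In a field with at least 23 elements both signs occur: for e = 1 or -1
   there is an a with chi(a^2 - 1) = chi(a^2 + 1) = -e.  Otherwise
   q + 2 e - 1 + phi 1 <= 8, so phi 1 <= 11 - q, contradicting
   (q - 1) phi(1)^2 <= 4 q^2. *)
Lemma exists_sign_pattern (e : int) : e = 1 \/ e = -1 -> (23 <= #|F|)%N ->
  exists a, chi (a ^+ 2 - 1) = - e /\ chi (a ^+ 2 + 1) = - e.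
Proof.
move=> he hq.
case: (boolP [exists a, (chi (a ^+ 2 - 1) == - e) && (chi (a ^+ 2 + 1) == - e)]).
  by move=> /existsP [a /andP [/eqP h1 /eqP h2]]; exists a.
rewrite negb_exists => /forallP hno; exfalso.
have hS : (#|F|%:R : int) + 2 * e - 1 + phi 1 <= 8.
  rewrite -sum_sign_pattern //; apply: sum_sign_pattern_small => // a [h1 h2].
  by move: (hno a); rewrite h1 h2 !eqxx.
have hb := phi1_sq_bound.
have hQ : 23 <= (#|F|%:R : int) by rewrite natz; lia.
move: (phi 1) (#|F|%:R : int) hS hb hQ => p Q hS hb hQ.
have hp : p <= 11 - Q by case: he => he; lia.
have : (Q - 11) ^+ 2 <= p ^+ 2 by nia.
nia.
Qed.

(* If (2a)^2 - 5 y^2 = 4 s then a^2 - s = (y/2)^2 * 5, so chi(a^2 - s) is 0 or chi 5. *)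
Lemma chi_norm_form a y s : (2 * a) ^+ 2 - 5 * y ^+ 2 = 4 * s ->
  chi (a ^+ 2 - s) = 0 \/ chi (a ^+ 2 - s) = chi 5.
Proof.
move=> hnorm.
have -> : a ^+ 2 - s = (y / 2) ^+ 2 * 5.
  have h4 : (4 : F) != 0 by rewrite (_ : 4 = 2 * 2) ?mulf_neq0 // -natrM.
  apply: (mulIf h4); rewrite (_ : (a ^+ 2 - s) * 4 = (2 * a) ^+ 2 - 4 * s); last by ring.
  by rewrite -hnorm; field.
have [->|yn0] := eqVneq (y / 2) 0; first by left; rewrite expr0n mul0r chi0.
by right; rewrite chi_sq_mul.
Qed.

End QuadraticCharacter.

Section LargePrimes.
Local Open Scope ring_scope.

Lemma complete_Fp p (t : 'F_p) : prime p -> complete_mod lucas p ->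
  exists n, (lucas n)%:R = t.
Proof.
move=> pp hc; have ht : (val t < p)%N := leq_trans (ltn_ord t) (eq_leq (Fp_cast pp)).
have [n [_ hn]] := hc (val t) ht.
by exists n; apply: val_inj; rewrite /= (val_Fp_nat pp) hn modn_small.
Qed.

(* The Lucas numbers are defective modulo every prime p >= 23: choose a with
   chi(a^2 - 1) = chi(a^2 + 1) = -chi(5); if L_n = 2a modulo p then
   (2a)^2 - 5 F_n^2 = 4 (-1)^n, so chi(a^2 - (-1)^n) is 0 or chi(5). *)
Lemma defective_large_prime p : prime p -> (23 <= p)%N -> ~ complete_mod lucas p.
Proof.
move=> pp hp hc.
have Fp_neq0 k : (0 < k < p)%N -> (k%:R : 'F_p) != 0.
  move=> hk; apply/eqP => /(congr1 val); rewrite /= (val_Fp_nat pp) modn_small; lia.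
have two : (2 : 'F_p) != 0 by apply: Fp_neq0; lia.
have five : (5 : 'F_p) != 0 by apply: Fp_neq0; lia.
have hF : (23 <= #|'F_p|)%N by rewrite card_Fp.
have [a [ha1 ha2]] := exists_sign_pattern two (chi_unit five) hF.
have [n hn] := complete_Fp (2 * a) pp hc.
have := congr1 (fun z : int => z%:~R : 'F_p) (lucas_fib_norm n).
rewrite /= !(rmorphB, rmorphM, rmorphXn, rmorphN1) /= /lucz -pmulrn hn.
rewrite !mulrz_nat -signr_odd => /chi_norm_form -/(_ two).
by case: (odd n); rewrite ?expr1 ?expr0 ?opprK ?ha1 ?ha2;
  case: (chi_unit five) => -> [] /eqP.
Qed.

End LargePrimes.

Lemma complete_dvd m d : 0 < m -> d %| m -> complete_mod lucas m -> complete_mod lucas d.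
Proof.
move=> m0 hdm hc r hr.
have [n [n1 hn]] := hc r (leq_trans hr (dvdn_leq m0 hdm)).
by exists n; split => //; apply/eqP; rewrite -(modn_dvdm _ hdm) hn modn_dvdm.
Qed.

Lemma complete_no_defective_divisor m : 0 < m -> complete_mod lucas m ->
  ~~ has (dvdn^~ m) [seq c.1 | c <- defect_certificates].
Proof.
move=> m0 hc; apply/hasP => -[d hd hdm].
exact: defective_small hd (complete_dvd m0 hdm hc).
Qed.

Lemma defective_prime p : prime p -> p \notin [:: 2; 3; 7] -> ~ complete_mod lucas p.
Proof.
move=> pp hn; case: (leqP 23 p) => [hp|hlt]; first exact: defective_large_prime.
apply: defective_small.
have /allP small_primes : all (fun p => prime p ==> (p \in [:: 2; 3; 7]) ||
    (p \in [seq c.1 | c <- defect_certificates])) (iota 0 23) by vm_compute.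
by have := small_primes p; rewrite mem_iota hlt pp (negPf hn) => /(_ isT).
Qed.

(* One more prime factor: if p is 2, 3 or 7 and k is in the list or a power of
   3 (possibly 3^0), then p k is in the list, a power 3^j with j >= 1, or has
   one of the defective divisors 8, 12, 18, 21, 28, 49. *)
Lemma complete_moduli_step p k : p \in [:: 2; 3; 7] ->
  (k \in [:: 2; 4; 6; 7; 14]) \/ (exists j, k = 3 ^ j) ->
  ~~ has (dvdn^~ (p * k)) [seq c.1 | c <- defect_certificates] ->
  (p * k \in [:: 2; 4; 6; 7; 14]) \/ (exists j : nat, 1 <= j /\ p * k = 3 ^ j).
Proof.
move=> hp [hk|[j ->]] hno.
  have /allP finite_cases : all (fun k => all (fun p => (p * k \in [:: 2; 4; 6; 7; 14]) ||
      has (dvdn^~ (p * k)) [seq c.1 | c <- defect_certificates]) [:: 2; 3; 7])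
      [:: 2; 4; 6; 7; 14] by [].
  have /allP /(_ p hp) /orP [hin|hdef] := finite_cases k hk; first by left.
  by rewrite hdef in hno.
have defect d : d \in [seq c.1 | c <- defect_certificates] -> ~~ (d %| p * 3 ^ j).
  by move=> hd; apply: contra hno => hdvd; apply/hasP; exists d.
rewrite !inE in hp; case/or3P: hp => /eqP ep; rewrite {hno p}ep in defect *.
- case: j defect => [|[|j]] defect; try by left.
  have /negP [] := defect 18 isT.
  by rewrite !expnS !mulnA dvdn_mulr.
- by right; exists j.+1; rewrite expnS.
- case: j defect => [|j] defect; first by left.
  have /negP [] := defect 21 isT.
  by rewrite expnS mulnA dvdn_mulr.
Qed.

(* The complete moduli, by strong induction: write m = p k with p a prime
   divisor of m; then p is 2, 3 or 7, and k is 1 or, by induction, one of the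
   complete moduli. *)
Lemma complete_moduli m : 2 <= m -> complete_mod lucas m ->
  (m \in [:: 2; 4; 6; 7; 14]) \/ (exists j : nat, 1 <= j /\ m = 3 ^ j).
Proof.
elim/ltn_ind: m => m IH hm hc.
have m0 : 0 < m by lia.
have [p pp hpm] := pdivP hm.
have hp : p \in [:: 2; 3; 7].
  by apply: contraT => hn; case: (defective_prime pp hn (complete_dvd m0 hpm hc)).
have [k em] : exists k, m = p * k by exists (m %/ p); rewrite mulnC divnK.
have k0 : 0 < k by move: m0; rewrite em muln_gt0 => /andP [].
rewrite em; apply: complete_moduli_step => //; last first.
  by rewrite -em; apply: complete_no_defective_divisor.
have [k1|k2] := leqP k 1; first by right; exists 0; lia.
have hkc : complete_mod lucas k by apply: complete_dvd m0 _ hc; rewrite em dvdn_mull.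
have hkm : k < m by rewrite em ltn_Pmull ?prime_gt1.
by case: (IH k hkm k2 hkc) => [|[j [_ ->]]]; [left | right; exists j].
Qed.

Theorem mainTheorem6 (m : nat) (hm : 2 <= m) :
  complete_mod lucas m <->
  (m \in [:: 2; 4; 6; 7; 14]) \/ (exists j : nat, 1 <= j /\ m = 3 ^ j).
Proof.
split; first exact: complete_moduli.
by case=> [|[j [j1 ->]]]; [exact: complete_small | exact: complete_pow3].
Qed.
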